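(* Let $n>1$ and $0 < t \leq n$. Let $R$ be a randomized $t$-query algorithm on $n$ input bits, and suppose $K \subseteq \{0,1\}^n$ is a set with $|K| > 2^{n-1}$ such that $\Pr[R(y) = \mathrm{PAR}(y)] \geq 2/3$ for every $y \in K$, where $\mathrm{PAR}(y)=y_1\oplus\cdots\oplus y_n$. Then there exists a Bob-strategy such that, if $(\pi,z)$ is drawn uniformly from $S_n\times\{0,1\}$ and $\mathbf{b} = b(\pi,z)$ is the resulting clue string, then \[ \Pr_{\pi,z,R}\big[\text{the execution of } R \text{ on } \mathbf{b} \text{ is search-successful}\big] \geq 1/3 . \]
   Context: A randomized $t$-query algorithm is a probability distribution over deterministic decision trees of depth $t$ on input variables $b_1,\dots,b_n$, each outputting a bit. Let $S_n$ be the set of permutations $\pi=(\pi(1),\dots,\pi(n))$ of $[n]$. A Bob-strategy is a family of functions $F_t : S_n \to \{0,1\}$, $t=1,\dots,n-1$, where each $F_t(\pi)$ depends only on $\pi(1),\dots,\pi(t)$. For a fixed Bob-strategy, $\pi\in S_n$ and $z\in\{0,1\}$, define $b(\pi,z)\in\{0,1\}^n$ by $b_j = F_t(\pi)$ if $j=\pi(t)$ for some $t<n$, and $b_j=z$ if $j=\pi(n)$. An execution of the randomized algorithm $R$ on $\mathbf{b}=b(\pi,z)$ is search-successful if the set of coordinates queried by $R$ in that execution contains $\pi(n)$. *)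

From HB Require Import structures.
From mathcomp Require Import all_boot all_order all_algebra all_fingroup.
Set Implicit Arguments. Unset Strict Implicit. Unset Printing Implicit Defensive.
Import Order.TTheory GRing.Theory Num.Theory.
Local Open Scope ring_scope.

(* Input variables b_1..b_n are indexed by 'I_n (0-based). *)

Inductive dtree (n : nat) : Type :=
| Leaf of bool
| Node of 'I_n & dtree n & dtree n.

Arguments Leaf {n}.

Fixpoint depth n (T : dtree n) : nat :=
  match T with
  | Leaf _ => 0
  | Node _ T0 T1 => (maxn (depth T0) (depth T1)).+1
  end.

Fixpoint eval n (T : dtree n) (b : {ffun 'I_n -> bool}) : bool :=
  match T with
  | Leaf o => o
  | Node i T0 T1 => if b i then eval T1 b else eval T0 b
  end.

Fixpoint queried n (T : dtree n) (b : {ffun 'I_n -> bool}) : seq 'I_n :=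
  match T with
  | Leaf _ => [::]
  | Node i T0 T1 => i :: queried (if b i then T1 else T0) b
  end.

(* A randomized t-query algorithm: a (finitely supported) probability
   distribution over decision trees of depth (at most) t, given as a list of
   (tree, weight) pairs. *)
Definition rand_alg (F : realFieldType) n (t : nat) (A : seq (dtree n * F)) : Prop :=
  [/\ all (fun p => depth p.1 <= t)%N A,
      all (fun p => 0 <= p.2) A &
      \sum_(p <- A) p.2 = 1].

Definition parity n (y : {ffun 'I_n -> bool}) : bool := \big[addb/false]_(i < n) y i.

Definition prob_correct (F : realFieldType) n (A : seq (dtree n * F))
  (y : {ffun 'I_n -> bool}) : F :=
  \sum_(p <- A) p.2 * (eval p.1 y == parity y)%:R.

(* Bob-strategy: F_t, t = 1..n-1, with F_t(pi) depending only on
   pi(1),...,pi(t); with 0-based positions these are pi 0, ..., pi (t-1). *)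
Definition bob_strategy n (Fb : nat -> {perm 'I_n} -> bool) : Prop :=
  forall (t : nat) (pi sigma : {perm 'I_n}),
    (1 <= t <= n.-1)%N ->
    (forall k : 'I_n, (val k < t)%N -> pi k = sigma k) ->
    Fb t pi = Fb t sigma.

(* b(pi,z): coordinate j = pi(t) (1-based position t = val k + 1) gets F_t(pi)
   if t < n, and z if t = n. *)
Definition clue n (Fb : nat -> {perm 'I_n} -> bool) (pi : {perm 'I_n}) (z : bool)
  : {ffun 'I_n -> bool} :=
  [ffun j => let k := (pi^-1)%g j in
             if (val k < n.-1)%N then Fb (val k).+1 pi else z].

(* the execution of tree T on b(pi,z) is search-successful:
   pi(n) (0-based position n-1) is among the queried coordinates. *)
Definition search_success n (T : dtree n) (pi : {perm 'I_n}) (b : {ffun 'I_n -> bool}) : bool :=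
  [exists k : 'I_n, (val k == n.-1) && (pi k \in queried T b)].

Definition prob_search (F : realFieldType) n (A : seq (dtree n * F))
  (Fb : nat -> {perm 'I_n} -> bool) : F :=
  (1 / (2 * (#|{perm 'I_n}|)%:R)) *
  \sum_(pi : {perm 'I_n}) \sum_(z : bool)
     \sum_(p <- A) p.2 * (search_success p.1 pi (clue Fb pi z))%:R.

From HB Require Import structures.
From mathcomp Require Import all_boot all_order all_algebra all_fingroup.
From mathcomp Require Import lra.
Import Order.TTheory GRing.Theory Num.Theory.
Local Open Scope ring_scope.
Set Implicit Arguments. Unset Strict Implicit. Unset Printing Implicit Defensive.

(* Bob answers greedily: revealing the coordinates in the order pi, he sets
   each one to the value taken by the majority of the strings of K that are
   still consistent with his previous answers.  Each answer keeps at least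
   half of them, so since |K| > 2^(n-1) at least two strings of K survive the
   n-1 answers; only the two completions b(pi,0), b(pi,1) are consistent with
   all answers, so both lie in K.  They differ only at pi(n) and have opposite
   parities, hence a tree that does not query pi(n) on them follows the same
   path on both and errs on one of them.  Weighting by R, being correct with
   probability 2/3 on both forces pi(n) to be queried with probability 1/3. *)

Section DecisionTrees.

Variable n : nat.
Implicit Types (T : dtree n) (b : {ffun 'I_n -> bool}).

Lemma queried_eval_unqueried T b0 b1 j :
  (forall i, i != j -> b0 i = b1 i) -> j \notin queried T b0 ->
  queried T b1 = queried T b0 /\ eval T b1 = eval T b0.
Proof.
move=> b01; elim: T => [o|i T0 IH0 T1 IH1] //=.
rewrite inE negb_or => /andP[ji j_q].
have -> : b1 i = b0 i by rewrite b01 // eq_sym.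
by case: (b0 i) j_q => [/IH1|/IH0] [-> ->].
Qed.

Lemma parity_flip b0 b1 j :
  (forall i, i != j -> b0 i = b1 i) -> b1 j = ~~ b0 j ->
  parity b1 = ~~ parity b0.
Proof.
move=> b01 b1j; rewrite /parity (bigD1 j) //= [in RHS](bigD1 j) //= b1j addNb.
by congr (~~ (_ (+) _)); apply: eq_bigr => i ij; rewrite b01.
Qed.

(* Before querying j the two runs coincide, so j is queried on both inputs or
   on neither; hence the factor 2. *)
Lemma correct_pair_le_queried T b0 b1 j :
  (forall i, i != j -> b0 i = b1 i) -> b1 j = ~~ b0 j ->
  (2 * ((eval T b0 == parity b0) + (eval T b1 == parity b1))
     <= 2 + (j \in queried T b0) + (j \in queried T b1))%N.
Proof.
move=> b01 b1j; have b10 : forall i, i != j -> b1 i = b0 i.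
  by move=> i ij; rewrite b01.
have par1 := parity_flip b01 b1j.
case q0: (j \in queried T b0).
  case q1: (j \in queried T b1).
    by case: (eval T b0 == _); case: (eval T b1 == _).
  by have [q01 _] := queried_eval_unqueried b10 (negbT q1); rewrite q01 q1 in q0.
have [-> ->] := queried_eval_unqueried b01 (negbT q0).
by rewrite q0 par1; case: (eval T b0); case: (parity b0).
Qed.

End DecisionTrees.

Section Expectation.

Variables (F : realFieldType) (n : nat) (A : seq (dtree n * F)).

Definition expect (f : dtree n -> F) : F := \sum_(p <- A) p.2 * f p.1.

Lemma ler_expect f g :
  all (fun p => 0 <= p.2) A -> (forall T, f T <= g T) -> expect f <= expect g.
Proof.
move=> A_ge0 fg; rewrite /expect; elim: A A_ge0 => [|p B IH] /=.
  by rewrite !big_nil.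
by move=> /andP[p_ge0 B_ge0]; rewrite !big_cons lerD ?IH ?ler_wpM2l.
Qed.

Lemma eq_expect f g : f =1 g -> expect f = expect g.
Proof. by move=> fg; rewrite /expect; apply: eq_bigr => p _; rewrite fg. Qed.

Lemma expectD f g : expect (fun T => f T + g T) = expect f + expect g.
Proof. by rewrite /expect -big_split; apply: eq_bigr => p _; rewrite mulrDr. Qed.

Lemma expectZ c f : expect (fun T => c * f T) = c * expect f.
Proof. by rewrite /expect mulr_sumr; apply: eq_bigr => p _; rewrite mulrCA. Qed.

Lemma expect_cst c : \sum_(p <- A) p.2 = 1 -> expect (fun=> c) = c.
Proof. by move=> A_sum1; rewrite /expect -mulr_suml A_sum1 mul1r. Qed.

End Expectation.

Lemma parity_pair_queried_ge (F : realFieldType) n t (A : seq (dtree n * F))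
    (b0 b1 : {ffun 'I_n -> bool}) j :
  rand_alg t A ->
  (forall i, i != j -> b0 i = b1 i) -> b1 j = ~~ b0 j ->
  2 / 3 <= prob_correct A b0 -> 2 / 3 <= prob_correct A b1 ->
  2 / 3 <= expect A (fun T => (j \in queried T b0)%:R)
           + expect A (fun T => (j \in queried T b1)%:R).
Proof.
move=> [_ A_ge0 A_sum1] b01 b1j ok0 ok1.
pose correct (b : {ffun 'I_n -> bool}) (T : dtree n) : F := (eval T b == parity b)%:R.
pose hits (b : {ffun 'I_n -> bool}) (T : dtree n) : F := (j \in queried T b)%:R.
have le_pair : expect A (fun T => 2 * (correct b0 T + correct b1 T))
               <= expect A (fun T => 2 + hits b0 T + hits b1 T).
  apply: ler_expect A_ge0 _ => T.
  by rewrite /correct /hits -!natrD -natrM ler_nat correct_pair_le_queried.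
rewrite expectZ !expectD expect_cst // in le_pair.
have ok0' : 2 / 3 <= expect A (correct b0) := ok0.
have ok1' : 2 / 3 <= expect A (correct b1) := ok1.
move: ok0' ok1' le_pair; rewrite /hits; lra.
Qed.

Section Clues.

Variables (m : nat) (Fb : nat -> {perm 'I_m.+1} -> bool) (pi : {perm 'I_m.+1}).

Lemma clue_last z : clue Fb pi z (pi ord_max) = z.
Proof. by rewrite ffunE /= permK /= ltnn. Qed.

Lemma perm_inv_lt_last i : i != pi ord_max -> (val ((pi^-1)%g i) < m)%N.
Proof.
move=> i_last; rewrite ltn_neqAle -ltnS ltn_ord andbT.
apply: contra i_last => /eqP inv_i_last.
by rewrite -[i](permKV pi) (_ : (pi^-1)%g i = ord_max) //; apply: val_inj.
Qed.

Lemma clue_not_last z i :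
  i != pi ord_max -> clue Fb pi z i = Fb (val ((pi^-1)%g i)).+1 pi.
Proof. by move=> i_last; rewrite ffunE /= perm_inv_lt_last. Qed.

Lemma clue_flip_last i :
  i != pi ord_max -> clue Fb pi true i = clue Fb pi false i.
Proof. by move=> i_last; rewrite !clue_not_last. Qed.

End Clues.

Section GreedyBob.

Variables (m : nat) (K : {set {ffun 'I_m.+1 -> bool}}).
Implicit Types (S : {set {ffun 'I_m.+1 -> bool}}) (pi sigma : {perm 'I_m.+1}).

Definition ones (j : 'I_m.+1) : {set {ffun 'I_m.+1 -> bool}} :=
  [set y : {ffun 'I_m.+1 -> bool} | y j].

Definition majority_bit S j : bool :=
  (#|(K :&: S) :\: ones j| <= #|(K :&: S) :&: ones j|)%N.

Definition majority_half S j :=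
  if majority_bit S j then S :&: ones j else S :\: ones j.

Fixpoint greedy_set pi s :=
  if s is s'.+1 then majority_half (greedy_set pi s') (pi (inord s')) else setT.

(* Position t (1-based) reveals pi(t), i.e. pi (inord t.-1). *)
Definition greedy_bob (t : nat) pi : bool :=
  majority_bit (greedy_set pi t.-1) (pi (inord t.-1)).

Lemma greedy_set_prefix pi sigma s :
  (s <= m.+1)%N -> (forall k : 'I_m.+1, (val k < s)%N -> pi k = sigma k) ->
  greedy_set pi s = greedy_set sigma s.
Proof.
elim: s => [//|s IH] s_le pi_sigma /=.
have pi_sigma_s k : (val k < s)%N -> pi k = sigma k by move/ltnW/pi_sigma.
by rewrite (IH (ltnW s_le) pi_sigma_s) pi_sigma // [val _]inordK.
Qed.

Lemma greedy_bob_strategy : bob_strategy greedy_bob.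
Proof.
move=> t pi sigma /andP[t_gt0 t_le] pi_sigma; rewrite /greedy_bob.
have t1_lt : (t.-1 < t)%N by rewrite prednK.
have t_lt : (t.-1 < m.+1)%N by rewrite ltnS (leq_trans (leq_pred t)).
have pi_sigma_t k : (val k < t.-1)%N -> pi k = sigma k.
  by move=> k_lt; apply/pi_sigma/(ltn_trans k_lt).
by rewrite (greedy_set_prefix (ltnW t_lt) pi_sigma_t) pi_sigma // [val _]inordK.
Qed.

Lemma mem_greedy_set pi s y : y \in greedy_set pi s ->
  forall k, (k < s)%N ->
  y (pi (inord k)) = majority_bit (greedy_set pi k) (pi (inord k)).
Proof.
elim: s => [//|s IH] /=; rewrite /majority_half.
case: ifP => maj; rewrite !inE => /andP[y_bit y_in] k;
  rewrite ltnS leq_eqVlt => /orP[/eqP -> | k_lt]; rewrite ?maj ?(negbTE y_bit) //;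
  exact: IH.
Qed.

Lemma card_majority_half S j :
  (#|K :&: S| <= 2 * #|K :&: majority_half S j|)%N.
Proof.
rewrite -(cardsID (ones j) (K :&: S)) /majority_half /majority_bit mul2n -addnn.
case: ifP => maj; first by rewrite setIA leq_add2l.
by rewrite setIDA leq_add2r ltnW // ltnNge maj.
Qed.

Lemma card_greedy_set pi s : (#|K| <= 2 ^ s * #|K :&: greedy_set pi s|)%N.
Proof.
elim: s => [|s IH] /=; first by rewrite setIT mul1n.
by rewrite (leq_trans IH) // expnS -mulnA mulnCA leq_mul2l card_majority_half orbT.
Qed.

Lemma greedy_set_clue pi y :
  y \in greedy_set pi m -> y = clue greedy_bob pi (y (pi ord_max)).
Proof.
move=> y_in; apply/ffunP => i.
have [-> | i_last] := eqVneq i (pi ord_max); first by rewrite clue_last.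
rewrite clue_not_last // /greedy_bob /=.
by have := mem_greedy_set y_in (perm_inv_lt_last i_last); rewrite inord_val permKV.
Qed.

Lemma clue_greedy_in pi z : (2 ^ m < #|K|)%N -> clue greedy_bob pi z \in K.
Proof.
move=> K_big; apply: contraT => clue_notin.
have two_in : (1 < #|K :&: greedy_set pi m|)%N.
  by rewrite -(ltn_pmul2l (expn_gt0 2 m)) muln1 (leq_trans K_big) ?card_greedy_set.
suff : (#|K :&: greedy_set pi m| <= 1)%N by rewrite leqNgt two_in.
rewrite -(cards1 (clue greedy_bob pi (~~ z))).
apply/subset_leq_card/subsetP => y; rewrite !inE => /andP[yK y_in].
rewrite (greedy_set_clue y_in) in yK *.
have [y_z | y_nz] := eqVneq (y (pi ord_max)) z.
  by rewrite y_z (negbTE clue_notin) in yK.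
by move: y_nz; case: (y _); case: z {clue_notin}.
Qed.

End GreedyBob.

Lemma search_successE m (T : dtree m.+1) (pi : {perm 'I_m.+1}) b :
  search_success T pi b = (pi ord_max \in queried T b).
Proof.
apply/existsP/idP => [[k /andP[/eqP k_last]]|last_q]; last first.
  by exists ord_max; rewrite /= eqxx last_q.
by rewrite (_ : k = ord_max) //; apply: val_inj.
Qed.

Lemma prob_search_ge (F : realFieldType) m (A : seq (dtree m.+1 * F)) Fb :
  (forall pi : {perm 'I_m.+1}, 2 / 3 <=
     \sum_(z : bool) expect A (fun T => (pi ord_max \in queried T (clue Fb pi z))%:R)) ->
  1 / 3 <= prob_search A Fb.
Proof.
move=> pair_ge; rewrite /prob_search [in X in _ <= X]mul1r ler_pdivlMl; last first.
  by rewrite mulr_gt0 // ltr0n; apply/card_gt0P; exists 1%g.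
have : \sum_(pi : {perm 'I_m.+1}) (2 / 3 : F) <= \sum_(pi : {perm 'I_m.+1})
    \sum_(z : bool) expect A (fun T => (search_success T pi (clue Fb pi z))%:R).
  apply: ler_sum => pi _; rewrite (le_trans (pair_ge pi)) //.
  by apply: ler_sum => z _; under [X in _ <= X]eq_expect do rewrite search_successE.
by rewrite sumr_const /expect /= -mulr_natl; lra.
Qed.

Theorem theorem2 (F : realFieldType) (n t : nat) (A : seq (dtree n * F))
  (K : {set {ffun 'I_n -> bool}}) :
  (1 < n)%N -> (0 < t <= n)%N ->
  rand_alg t A ->
  (2 ^ n.-1 < #|K|)%N ->
  (forall y, y \in K -> 2%:R / 3%:R <= prob_correct A y) ->
  exists Fb : nat -> {perm 'I_n} -> bool,
    bob_strategy Fb /\ 1 / 3%:R <= prob_search A Fb.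
Proof.
case: n A K => [//|m] A K _ _ alg_A K_big correct_K.
exists (greedy_bob K); split; first exact: greedy_bob_strategy.
apply: prob_search_ge => pi; rewrite big_bool /=.
apply: (parity_pair_queried_ge (j := pi ord_max) alg_A).
- exact: clue_flip_last.
- by rewrite !clue_last.
- exact/correct_K/clue_greedy_in.
- exact/correct_K/clue_greedy_in.
Qed.
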